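(* Let $\sigma:\mathbb{R}\to\mathbb{R}$ be an increasing odd homeomorphism. The group $\Gamma_2(\sigma)$ generated by $h_\sigma^2$ and $v_\sigma^2$ is a free group.
   Context: $h_\sigma(x,y)=(x+\sigma^{-1}(y),y)$ and $v_\sigma(x,y)=(x,\sigma(x)+y)$ are bijections of $\mathbb{R}^2$; the group operation is composition. *)

From Stdlib Require Import Reals Lra ZArith List.
Open Scope R_scope.

Definition pt := (R * R)%type.

Definition h_map (sinv : R -> R) (p : pt) : pt := (fst p + sinv (snd p), snd p).
Definition h_inv (sinv : R -> R) (p : pt) : pt := (fst p - sinv (snd p), snd p).
Definition v_map (s : R -> R) (p : pt) : pt := (fst p, s (fst p) + snd p).
Definition v_inv (s : R -> R) (p : pt) : pt := (fst p, snd p - s (fst p)).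

Fixpoint iter_map (n : nat) (f : pt -> pt) (p : pt) : pt :=
  match n with O => p | S k => f (iter_map k f p) end.

Definition zpow (f g : pt -> pt) (n : Z) : pt -> pt :=
  match n with
  | Z0 => fun p => p
  | Zpos k => iter_map (Pos.to_nat k) f
  | Zneg k => iter_map (Pos.to_nat k) g
  end.

Definition letter_map (s sinv : R -> R) (l : bool * Z) : pt -> pt :=
  let (b, n) := l in
  if b then zpow (h_map sinv) (h_inv sinv) (2 * n)
  else zpow (v_map s) (v_inv s) (2 * n).

(* The element of the group represented by a word (composition, the first
   letter is the leftmost factor). *)
Fixpoint word_map (s sinv : R -> R) (w : list (bool * Z)) : pt -> pt :=
  match w with
  | nil => fun p => p
  | l :: w' => fun p => letter_map s sinv l (word_map s sinv w' p)
  end.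

Fixpoint reduced_word (w : list (bool * Z)) : Prop :=
  match w with
  | nil => True
  | (b, n) :: w' =>
      n <> 0%Z /\
      match w' with
      | nil => True
      | (b', _) :: _ => b <> b'
      end /\ reduced_word w'
  end.

Definition freely_generated_by_h2_v2 (s sinv : R -> R) : Prop :=
  forall w : list (bool * Z), w <> nil -> reduced_word w ->
    word_map s sinv w <> (fun p => p).

(* Ping-pong.  Measure a point (x, y) by the coordinates x and sigma^-1 y.  Any
   nonzero power h^(2n) shears x by 2n sigma^-1 y, so it sends the region where
   sigma^-1 y dominates into the region where x dominates and makes the larger
   coordinate strictly larger in absolute value; since sigma is odd and
   increasing, v^(2n) does the same with the roles of the coordinates exchanged.
   Along a reduced word the regions alternate, so the larger coordinate grows
   strictly and the word cannot act as the identity. *)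

From Stdlib Require Import Reals ZArith List Lra Lia.
Open Scope R_scope.

Lemma iter_map_shear_x (d : R -> R) (f : pt -> pt) :
  (forall p, f p = (fst p + d (snd p), snd p)) ->
  forall k p, iter_map k f p = (fst p + INR k * d (snd p), snd p).
Proof.
  intros Hf k p; induction k as [|k IH]; cbn [iter_map].
  - destruct p; simpl; f_equal; ring.
  - rewrite Hf, IH, S_INR; cbn [fst snd]; f_equal; ring.
Qed.

Lemma iter_map_shear_y (d : R -> R) (f : pt -> pt) :
  (forall p, f p = (fst p, snd p + d (fst p))) ->
  forall k p, iter_map k f p = (fst p, snd p + INR k * d (fst p)).
Proof.
  intros Hf k p; induction k as [|k IH]; cbn [iter_map].
  - destruct p; simpl; f_equal; ring.
  - rewrite Hf, IH, S_INR; cbn [fst snd]; f_equal; ring.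
Qed.

Lemma INR_Pos_to_nat (k : positive) : INR (Pos.to_nat k) = IZR (Zpos k).
Proof. now rewrite INR_IZR_INZ, positive_nat_Z. Qed.

Lemma zpow_h_map (sinv : R -> R) (m : Z) (p : pt) :
  zpow (h_map sinv) (h_inv sinv) m p = (fst p + IZR m * sinv (snd p), snd p).
Proof.
  destruct m as [|k|k]; cbn [zpow].
  - destruct p; simpl; f_equal; ring.
  - now rewrite (iter_map_shear_x sinv), INR_Pos_to_nat.
  - rewrite (iter_map_shear_x (fun y => - sinv y)), INR_Pos_to_nat, IZR_NEG.
    + f_equal; ring.
    + reflexivity.
Qed.

Lemma zpow_v_map (s : R -> R) (m : Z) (p : pt) :
  zpow (v_map s) (v_inv s) m p = (fst p, snd p + IZR m * s (fst p)).
Proof.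
  destruct m as [|k|k]; cbn [zpow].
  - destruct p; simpl; f_equal; ring.
  - rewrite (iter_map_shear_y s), INR_Pos_to_nat; [reflexivity|].
    intro; unfold v_map; f_equal; ring.
  - rewrite (iter_map_shear_y (fun x => - s x)), INR_Pos_to_nat, IZR_NEG.
    + f_equal; ring.
    + intro; unfold v_inv; f_equal; ring.
Qed.

Lemma Rabs_IZR_double_ge (n : Z) : n <> 0%Z -> 2 <= Rabs (IZR (2 * n)).
Proof.
  intro Hn; rewrite Rabs_Zabs.
  apply IZR_le; lia.
Qed.

Lemma Rabs_lt_Rabs_add_mul (a c t : R) :
  Rabs a < Rabs t -> 2 <= Rabs c -> Rabs t < Rabs (a + c * t).
Proof.
  intros Hat Hc.
  pose proof (Rabs_triang_inv (c * t) (- a)) as Htri.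
  replace (c * t - - a) with (a + c * t) in Htri by ring.
  rewrite Rabs_mult, Rabs_Ropp in Htri.
  pose proof (Rabs_pos t); nra.
Qed.

Lemma strict_increasing_lt_iff (f : R -> R) :
  (forall x y, x < y -> f x < f y) -> forall a b, f a < f b <-> a < b.
Proof.
  intros Hf a b; split; [|apply Hf].
  intro Hab; destruct (Rlt_le_dec a b) as [|[Hba | ->]]; [easy| |lra].
  apply Hf in Hba; lra.
Qed.

(* [region true] is where x dominates sigma^-1 y; it attracts the powers of
   h^2, and [region false] those of v^2. *)
Definition region (sinv : R -> R) (b : bool) (p : pt) : Prop :=
  if b then Rabs (sinv (snd p)) < Rabs (fst p)
  else Rabs (fst p) < Rabs (sinv (snd p)).

Definition gauge (sinv : R -> R) (p : pt) : R :=
  Rmax (Rabs (fst p)) (Rabs (sinv (snd p))).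

Lemma gauge_region (sinv : R -> R) (b : bool) (p : pt) : region sinv b p ->
  gauge sinv p = if b then Rabs (fst p) else Rabs (sinv (snd p)).
Proof.
  unfold region, gauge; destruct b; intro Hp.
  - apply Rmax_left; lra.
  - apply Rmax_right; lra.
Qed.

Section PingPong.

Variables sigma sigma_inv : R -> R.
Hypothesis sigma_increasing : forall x y, x < y -> sigma x < sigma y.
Hypothesis sigma_odd : forall x, sigma (- x) = - sigma x.
Hypothesis sigma_inv_sigma : forall x, sigma_inv (sigma x) = x.
Hypothesis sigma_sigma_inv : forall y, sigma (sigma_inv y) = y.

Lemma Rabs_sigma (x : R) : Rabs (sigma x) = sigma (Rabs x).
Proof.
  assert (sigma0 : sigma 0 = 0).
  { pose proof (sigma_odd 0) as H; rewrite Ropp_0 in H; lra. }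
  destruct (Rtotal_order x 0) as [Hx | [-> | Hx]].
  - pose proof (sigma_increasing _ _ Hx).
    rewrite (Rabs_left x), Rabs_left, sigma_odd by lra; reflexivity.
  - now rewrite Rabs_R0, sigma0, Rabs_R0.
  - pose proof (sigma_increasing _ _ Hx).
    rewrite (Rabs_right x), Rabs_right by lra; reflexivity.
Qed.

Lemma Rabs_sigma_lt_iff (a b : R) :
  Rabs (sigma a) < Rabs (sigma b) <-> Rabs a < Rabs b.
Proof.
  rewrite !Rabs_sigma; exact (strict_increasing_lt_iff _ sigma_increasing _ _).
Qed.

Lemma region_inhabited (b : bool) : exists p, region sigma_inv b p.
Proof.
  destruct b; [exists (1, sigma 0) | exists (0, sigma 1)]; simpl;
    rewrite sigma_inv_sigma, Rabs_R0, Rabs_R1; lra.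
Qed.

Lemma letter_map_ping_pong (b : bool) (n : Z) (p : pt) :
  n <> 0%Z -> region sigma_inv (negb b) p ->
  let q := letter_map sigma sigma_inv (b, n) p in
  region sigma_inv b q /\ gauge sigma_inv p < gauge sigma_inv q.
Proof.
  intros Hn Hp q.
  assert (Hq : region sigma_inv b q).
  { pose proof (Rabs_IZR_double_ge n Hn) as Hc.
    destruct p as [x y]; subst q; destruct b; cbn in Hp |- *.
    - rewrite zpow_h_map; exact (Rabs_lt_Rabs_add_mul _ _ _ Hp Hc).
    - rewrite zpow_v_map; cbn [fst snd].
      rewrite <- Rabs_sigma_lt_iff, sigma_sigma_inv in Hp |- *.
      exact (Rabs_lt_Rabs_add_mul _ _ _ Hp Hc). }
  split; [exact Hq|].
  rewrite (gauge_region _ _ _ Hp), (gauge_region _ _ _ Hq).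
  destruct p as [x y]; subst q; destruct b; cbn in Hp, Hq |- *.
  - now rewrite zpow_h_map in Hq |- *.
  - now rewrite zpow_v_map in Hq |- *.
Qed.

Let default_letter : bool * Z := (true, 0%Z).

Lemma word_map_ping_pong (w : list (bool * Z)) (p : pt) :
  w <> nil -> reduced_word w ->
  region sigma_inv (negb (fst (last w default_letter))) p ->
  region sigma_inv (fst (hd default_letter w)) (word_map sigma sigma_inv w p) /\
  gauge sigma_inv p < gauge sigma_inv (word_map sigma sigma_inv w p).
Proof.
  induction w as [|[b n] w IH]; intros Hne Hred Hp; [contradiction|].
  cbn [reduced_word] in Hred; destruct Hred as (Hn & Halt & Hred).
  destruct w as [|[b' n'] w].
  - exact (letter_map_ping_pong b n p Hn Hp).
  - destruct (IH ltac:(discriminate) Hred Hp) as [Hreg Hgrow].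
    cbn [hd fst] in Hreg; cbn in Halt.
    assert (Hb' : b' = negb b) by (destruct b, b'; cbn; congruence).
    subst b'.
    destruct (letter_map_ping_pong b n _ Hn Hreg) as [Hreg' Hgrow'].
    split; [exact Hreg' | exact (Rlt_trans _ _ _ Hgrow Hgrow')].
Qed.

End PingPong.

Theorem proposition1 (sigma sigma_inv : R -> R)
  (Hcont : continuity sigma)
  (Hincr : forall x y : R, x < y -> sigma x < sigma y)
  (Hodd : forall x : R, sigma (- x) = - sigma x)
  (Hinv1 : forall x : R, sigma_inv (sigma x) = x)
  (Hinv2 : forall y : R, sigma (sigma_inv y) = y)
  (Hcont_inv : continuity sigma_inv) :
  freely_generated_by_h2_v2 sigma sigma_inv.
Proof.
  intros w Hne Hred Hid.
  destruct (region_inhabited sigma sigma_inv Hinv1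
              (negb (fst (last w (true, 0%Z))))) as [p Hp].
  destruct (word_map_ping_pong sigma sigma_inv Hincr Hodd Hinv2 w p Hne Hred Hp)
    as [_ Hgrow].
  rewrite Hid in Hgrow; lra.
Qed.
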